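(* Let $\mu$ be a $(C,\gamma)$-absolutely decaying measure on $\mathbb{R}$ with associated constant $\rho_0$, let $K=\operatorname{supp}\mu$, and let $0<\alpha\le\frac14\left(\frac{1}{3C}\right)^{1/\gamma}$. Then for every $0<\rho<\rho_0$, every $x_1\in K$ and every finite collection of points $y_1,\dots,y_N\in\mathbb{R}$, there exists $x_1'\in K$ with $B(x_1',\alpha\rho)\subset B(x_1,\rho)$ and such that for at least half of the indices $i\in\{1,\dots,N\}$ one has $d(B(x_1',\alpha\rho),y_i)>\alpha\rho$.
   Context: $B(x,\rho)$ denotes the closed interval $[x-\rho,x+\rho]$, and $d(A,y)=\inf_{a\in A}|a-y|$. A locally finite Borel measure $\mu$ on $\mathbb{R}$ is $(C,\gamma)$-absolutely decaying with constant $\rho_0>0$ if for all $0<\rho\le\rho_0$, $x\in\operatorname{supp}\mu$, $y\in\mathbb{R}$, $\varepsilon>0$: $\mu(B(x,\rho)\cap B(y,\varepsilon\rho))<C\varepsilon^\gamma\mu(B(x,\rho))$. *)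

From HB Require Import structures.
From mathcomp Require Import all_boot all_order all_algebra.
From mathcomp Require Import all_classical all_reals all_analysis.
Set Implicit Arguments. Unset Strict Implicit. Unset Printing Implicit Defensive.
Import Order.TTheory GRing.Theory Num.Theory.
Local Open Scope classical_set_scope.
Local Open Scope ring_scope.

Definition cball (R : realType) (x r : R) : set R := [set z | `|z - x| <= r].

Definition dist_set (R : realType) (A : set R) (y : R) : R :=
  inf [set `|a - y| | a in A].

(* Borel measure on R (the canonical measurable structure of R) *)
Definition locally_finite (R : realType) (mu : {measure set R -> \bar R}) : Prop :=
  forall x : R, exists2 r : R, 0 < r & (mu (cball x r) < +oo)%E.

Definition supp (R : realType) (mu : {measure set R -> \bar R}) : set R :=
  [set x | forall r : R, 0 < r -> (0 < mu [set z | (`|z - x| < r)%R])%E].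

Definition absolutely_decaying (R : realType) (mu : {measure set R -> \bar R})
    (C gamma rho0 : R) : Prop :=
  forall rho : R, 0 < rho -> rho <= rho0 ->
  forall x : R, supp mu x -> forall y eps : R, 0 < eps ->
    (mu (cball x rho `&` cball y (eps * rho)%R) <
       (C * eps `^ gamma)%R%:E * mu (cball x rho))%E.

From HB Require Import structures.
From mathcomp Require Import all_boot all_order all_algebra.
From mathcomp Require Import all_classical all_reals all_analysis.
From mathcomp Require Import lra zify.
Set Implicit Arguments. Unset Strict Implicit. Unset Printing Implicit Defensive.
Import Order.TTheory GRing.Theory Num.Theory.
Local Open Scope classical_set_scope.
Local Open Scope ring_scope.

(* Decay with [eps = (3 C)^(-1/gamma)] gives [C eps^gamma = 1/3], so the parts of
   [B(x1, rho)] within [eps rho] of its centre and of its two endpoints each carry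
   less than a third of its (finite) mass.  Hence the annulus
   [eps rho < |z - x1| < rho - eps rho] has positive mass and meets the support in
   some [z], for which [B(z, alpha rho)] still lies in [B(x1, rho)].  As
   [|z - x1| > eps rho >= 4 alpha rho], a point within [2 alpha rho] of [x1] is more
   than [2 alpha rho] from [z]; so at least half of the [y_i] are that far from [x1],
   or at least half are that far from [z], and such a [y_i] is more than
   [alpha rho] away from the ball of radius [alpha rho] around that centre. *)

Section balls.
Variable R : realType.
Implicit Types x c r rho : R.

Lemma oballE x r : [set z | `|z - x| < r] = [set` `]x - r, x + r[].
Proof. by apply/seteqP; split => z /=; rewrite in_itv /= ltr_distl. Qed.

Lemma cballE x r : cball x r = [set` `[x - r, x + r]].
Proof. by apply/seteqP; split => z /=; rewrite /cball in_itv /= ler_distl. Qed.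

Lemma measurable_oball x r : measurable [set z | `|z - x| < r].
Proof. by rewrite oballE; exact: measurable_itv. Qed.

Lemma measurable_cball x r : measurable (cball x r).
Proof. by rewrite cballE; exact: measurable_itv. Qed.

Lemma cball_sub c r x rho : `|c - x| + r <= rho -> cball c r `<=` cball x rho.
Proof. by rewrite /cball => h z /= hz; have := ler_distD c z x; lra. Qed.

Lemma dist_set_cball_gt c r y : 0 <= r -> 2 * r < `|y - c| ->
  r < dist_set (cball c r) y.
Proof.
move=> r0 h; apply: (@lt_le_trans _ _ (`|y - c| - r)); first lra.
apply: lb_le_inf; first by exists `|c - y|, c; rewrite // /cball /= subrr normr0.
move=> _ [a ha <-]; have := ler_distD a y c.
by rewrite (distrC a y) /cball /= in ha *; lra.
Qed.

Lemma cball_cover x rho e : 0 <= e ->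
  cball x rho `<=` ([set z | `|z - x| < rho - e] `\` cball x e)
                   `|` cball x e `|` cball (x + rho) e `|` cball (x - rho) e.
Proof.
rewrite /cball => e0 z /= hz.
have [zx|zx] := lerP `|z - x| e; first by left; left; right.
have [zin|zout] := ltrP `|z - x| (rho - e); first by do 3 left; split => //=; lra.
have [xz|xz] := lerP x z.
  left; right; rewrite /= ler_distl; rewrite ger0_norm ?subr_ge0 // in hz zout.
  by apply/andP; split; lra.
right; rewrite /= ler_distl; rewrite ltr0_norm ?subr_lt0 // in hz zout.
by apply/andP; split; lra.
Qed.

End balls.

Section support.
Variables (R : realType) (mu : {measure set R -> \bar R}).

(* [~` supp mu] is covered by the countably many null intervals with rational
   endpoints. *)
Let null_itv (p q : rat) : set R :=
  if mu [set` `]ratr p, ratr q[] == 0%E then [set` `]ratr p, ratr q[] else set0.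

Lemma negligible_setC_supp : mu.-negligible (~` supp mu).
Proof.
pose F (n : nat) := if unpickle n is Some (p, q) then null_itv p q else set0.
have negF n : mu.-negligible (F n).
  rewrite /F /null_itv; case: (unpickle n) => [[p q]|]; last exact: negligible_set0.
  case: eqP => [null|_]; last exact: negligible_set0.
  by apply/negligibleP => //; exact: measurable_itv.
apply: (negligibleS _ (negligible_bigcup negF)) => z /existsNP[r /not_implyP[r0]].
move/negP; rewrite -leNgt => null_ball.
have [p p1 p2] : exists2 p : rat, z - r < ratr p & ratr p < z.
  by have [|p] := @rat_in_itvoo _ (z - r) z; [lra | rewrite in_itv => /andP[]; exists p].
have [q q1 q2] : exists2 q : rat, z < ratr q & ratr q < z + r.
  by have [|q] := @rat_in_itvoo _ z (z + r); [lra | rewrite in_itv => /andP[]; exists q].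
exists (pickle (p, q)); first exact: I.
rewrite /F pickleK /null_itv.
have -> : mu [set` `]ratr p, ratr q[] = 0%E.
  apply/eqP; rewrite eq_le measure_ge0 andbT; apply: le_trans null_ball.
  rewrite oballE; apply: le_measure; rewrite ?inE; try exact: measurable_itv.
  by apply: subset_itvW; apply/ltW.
by rewrite eqxx /= in_itv /= p2 q1.
Qed.

Lemma supp_meets_measure_gt0 (A : set R) : measurable A -> (0 < mu A)%E ->
  exists2 z, A z & supp mu z.
Proof.
move=> mA muA; apply: contrapT => /forall2NP noz.
have : mu.-negligible A.
  by apply: negligibleS negligible_setC_supp => z Az; case: (noz z).
by move=> /(measure_negligible mA) null; rewrite null ltxx in muA.
Qed.

End support.

Lemma powRVK (R : realType) (x g : R) : 0 <= x -> g != 0 -> (x `^ g^-1) `^ g = x.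
Proof. by move=> x0 g0; rewrite -powRrM mulVf // powRr1. Qed.

Lemma measure_gt0_of_cover d (T : measurableType d) (R : realType)
    (mu : {measure set T -> \bar R}) (B E D1 D2 D3 : set T) :
  measurable B -> measurable E ->
  measurable D1 -> measurable D2 -> measurable D3 ->
  (mu B < +oo)%E -> B `<=` E `|` D1 `|` D2 `|` D3 ->
  (mu (B `&` D1) < (3^-1)%:E * mu B)%E ->
  (mu (B `&` D2) < (3^-1)%:E * mu B)%E ->
  (mu (B `&` D3) < (3^-1)%:E * mu B)%E ->
  (0 < mu E)%E.
Proof.
move=> mB mE mD1 mD2 mD3 Bfin cover small1 small2 small3.
have mBD1 := measurableI _ _ mB mD1; have mBD2 := measurableI _ _ mB mD2.
have mBD3 := measurableI _ _ mB mD3.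
have subadd : (mu B <= mu E + mu (B `&` D1) + mu (B `&` D2) + mu (B `&` D3))%E.
  have cover' : B `<=` E `|` (B `&` D1) `|` (B `&` D2) `|` (B `&` D3).
    move=> z Bz; have [[[Ez|D1z]|D2z]|D3z] := cover z Bz.
    - by do 3 left.
    - by do 2 left; right.
    - by left; right.
    - by right.
  apply: (le_trans (le_measure _ _ _ cover')); rewrite ?inE //.
    by repeat apply: measurableU.
  do 2 (apply: (le_trans (measureU2 _ _ _)); [by repeat apply: measurableU | by [] |
         apply: leeD => //]).
  exact: measureU2.
have finB : mu B \is a fin_num by rewrite ge0_fin_numE ?measure_ge0.
have finD D : (mu D < (3^-1)%:E * mu B)%E -> mu D \is a fin_num.
  move=> small; rewrite ge0_fin_numE ?measure_ge0 //; apply: lt_trans small _.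
  by rewrite -(fineK finB) -EFinM ltry.
have [finE|infE] := boolP (mu E \is a fin_num); last first.
  by rewrite ge0_fin_numE ?measure_ge0 // -leNgt leye_eq in infE; rewrite (eqP infE).
have fin1 := finD _ small1; have fin2 := finD _ small2; have fin3 := finD _ small3.
move: subadd small1 small2 small3.
rewrite -(fineK fin1) -(fineK fin2) -(fineK fin3) -(fineK finB) -(fineK finE).
rewrite -!EFinD -EFinM !lee_fin !lte_fin.
have : 0 <= fine (mu E) by rewrite fine_ge0 ?measure_ge0.
lra.
Qed.

Section absolutely_decaying.
Variables (R : realType) (mu : {measure set R -> \bar R}) (C gamma rho0 : R).
Hypothesis decay : absolutely_decaying mu C gamma rho0.

Lemma absolutely_decaying_cball_fin x rho : 0 < rho -> rho <= rho0 ->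
  supp mu x -> (mu (cball x rho) < +oo)%E.
Proof.
move=> rho_gt0 rho_le x_supp; have := decay rho_gt0 rho_le x_supp x ltr01.
rewrite mul1r setIid => small; rewrite ltNge leye_eq; apply/negP => /eqP oo.
by rewrite oo ltNge leey in small.
Qed.

Lemma supp_in_annulus eps x rho : 0 < eps -> C * eps `^ gamma = 3^-1 ->
  0 < rho -> rho <= rho0 -> supp mu x ->
  exists2 z, supp mu z & eps * rho < `|z - x| < rho - eps * rho.
Proof.
move=> eps_gt0 third rho_gt0 rho_le x_supp; set e := eps * rho.
have e_ge0 : 0 <= e by rewrite mulr_ge0 ?ltW.
have small c : (mu (cball x rho `&` cball c e) < (3^-1)%:E * mu (cball x rho))%E.
  by rewrite -third; exact: decay.
set E := [set z | `|z - x| < rho - e] `\` cball x e.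
have mE : measurable E.
  by apply: measurableD; [exact: measurable_oball | exact: measurable_cball].
have muE_gt0 : (0 < mu E)%E.
  apply: (measure_gt0_of_cover _ _ _ _ _
    (absolutely_decaying_cball_fin rho_gt0 rho_le x_supp) (cball_cover e_ge0));
    rewrite ?small //; exact: measurable_cball.
have [z [zx_lt zx_gt] z_supp] := supp_meets_measure_gt0 mE muE_gt0.
by exists z => //; rewrite zx_lt andbT ltNge; exact/negP.
Qed.

End absolutely_decaying.

Lemma half_far_from_one_of (R : realType) (N : nat) (y : 'I_N -> R)
    (c1 c2 r : R) :
  4 * r < `|c1 - c2| ->
  exists2 c, c = c1 \/ c = c2 &
    exists S : {set 'I_N},
      (N <= 2 * #|S|)%N /\ forall i, i \in S -> 2 * r < `|y i - c|.
Proof.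
move=> far; pose far_from c := finset (fun i => 2 * r < `|y i - c|).
have far_cover : ~: far_from c1 \subset far_from c2.
  apply/fintype.subsetP => i; rewrite !inE -leNgt => near1.
  by have := ler_distD (y i) c1 c2; rewrite (distrC c1 (y i)); lra.
have [half1|half2] := leqP N (2 * #|far_from c1|).
  by exists c1; [left | exists (far_from c1); split => // i; rewrite inE].
exists c2; first by right.
exists (far_from c2); split => [|i]; last by rewrite inE.
move: half2 (subset_leq_card far_cover) (cardsC (far_from c1)); rewrite card_ord.
move: #|far_from c1| #|~: far_from c1| #|far_from c2| => n1 n1' n2; lia.
Qed.

Theorem lemma3p2 (R : realType) (mu : {measure set R -> \bar R})
  (C gamma rho0 alpha : R) :
  0 < C -> 0 < gamma -> 0 < rho0 ->
  locally_finite mu ->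
  absolutely_decaying mu C gamma rho0 ->
  0 < alpha -> alpha <= 4^-1 * ((3 * C)^-1) `^ (gamma^-1) ->
  forall rho : R, 0 < rho -> rho < rho0 ->
  forall x1 : R, supp mu x1 ->
  forall (N : nat) (y : 'I_N -> R),
  exists2 x1' : R, supp mu x1' &
    cball x1' (alpha * rho) `<=` cball x1 rho /\
    exists S : {set 'I_N}, (N <= 2 * #|S|)%N /\
      forall i, i \in S -> dist_set (cball x1' (alpha * rho)) (y i) > alpha * rho.
Proof.
move=> C_gt0 gamma_gt0 _ _ decay alpha_gt0 alpha_le rho rho_gt0 rho_lt x1 x1_supp N y.
set eps := (3 * C)^-1 `^ gamma^-1 in alpha_le.
have eps_gt0 : 0 < eps by rewrite powR_gt0 // invr_gt0 mulr_gt0.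
have third : C * eps `^ gamma = 3^-1.
  rewrite powRVK ?invr_ge0 ?mulr_ge0 ?ltW ?gt_eqF //.
  by rewrite invfM mulrCA divff ?gt_eqF ?mulr1.
have [z z_supp /andP[zx_gt zx_lt]] :=
  supp_in_annulus decay eps_gt0 third rho_gt0 (ltW rho_lt) x1_supp.
set r := alpha * rho.
have r_ge0 : 0 <= r by rewrite mulr_ge0 ?ltW.
have r4 : 4 * r <= eps * rho.
  by have := ler_wpM2r (ltW rho_gt0) alpha_le; rewrite /r; lra.
have far : 4 * r < `|x1 - z| by rewrite distrC; lra.
have [c c_x1z [S [S_half S_far]]] := half_far_from_one_of y far.
exists c; first by case: c_x1z => ->.
split; first by apply: cball_sub; case: c_x1z => ->; rewrite ?subrr ?normr0; lra.
by exists S; split => // i /S_far; exact: dist_set_cball_gt.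
Qed.
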